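(* Let $V$ be a vector space over a field $\mathbb{K}$, $F$ a bilinear form on $V$, $Q=Q_F$ (i.e. $Q(x)=F(x,x)$), and let $F'=F+A$ with $A$ an alternating bilinear form on $V$ (so $Q_{F'}=Q$). Let $\rho_F,\rho_{F'}:\mathrm{Cl}(V,Q)\to\mathrm{End}(\bigwedge(V))$ be the representations $\rho_F=\bar\Lambda_F$, $\rho_{F'}=\bar\Lambda_{F'}$. Then these representations are equivalent; namely $$\rho_{F'}(a)=\bar\lambda_A\circ\rho_F(a)\circ\bar\lambda_A^{-1}\quad\text{for all }a\in\mathrm{Cl}(V,Q).$$
   Context: $\mathrm{Cl}(V,Q)=\mathcal{T}(V)/I(Q)$ where $I(Q)$ is the two-sided ideal of the tensor algebra generated by $x\otimes x-Q(x)1$; $\bigwedge(V)=\mathrm{Cl}(V,0)$ is the exterior algebra. For $f\in V^*$, $\bar{i}_f$ is the unique linear map on $\bigwedge(V)$ with $\bar{i}_f(1)=0$ and $\bar{i}_f(x\wedge w)=f(x)w-x\wedge\bar{i}_f(w)$ ($x\in V$); for a bilinear form $G$, $\bar{i}_x^G:=\bar{i}_{g_x}$ with $g_x(y)=G(x,y)$. For $x\in V$ the operator $\bar e_x+\bar{i}_x^G$ on $\bigwedge(V)$ (with $\bar e_x(w)=x\wedge w$) squares to $G(x,x)$, so $x\mapsto \bar e_x+\bar i_x^G$ extends uniquely to an algebra homomorphism $\bar\Lambda_G:\mathrm{Cl}(V,Q_G)\to\mathrm{End}(\bigwedge(V))$, where $Q_G(x)=G(x,x)$. For an alternating form $A$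 (so $Q_A=0$), $\bar\lambda_A:\bigwedge(V)\to\bigwedge(V)$ is $\bar\lambda_A(u)=\bar\Lambda_A(u)(1)$; it is a linear bijection with inverse $\bar\lambda_{-A}$. *)

(* Elements of Cl(V,Q) and of /\(V) = Cl(V,0) are handled through their
   representatives in the free algebra; equality in the quotient is the
   ideal congruence [cong Q]. *)
From HB Require Import structures.
From mathcomp Require Import all_boot all_order all_algebra.
Set Implicit Arguments. Unset Strict Implicit. Unset Printing Implicit Defensive.
Import Order.TTheory GRing.Theory Num.Theory.
Local Open Scope ring_scope.

Section CliffordDefs.
Variables (K : fieldType) (V : lmodType K).

(* free associative K-algebra on the set V: finite formal sums of
   (coefficient, word) monomials; its "true" equality is [coef] equality *)
Definition fa := seq (K * seq V).

Definition fscale (c : K) (u : fa) : fa := [seq (c * m.1, m.2) | m <- u].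
Definition fmul (u v : fa) : fa :=
  [seq (m.1 * n.1, m.2 ++ n.2) | m <- u, n <- v].
Definition fword (w : seq V) : fa := [:: (1, w)].
Definition coef (u : fa) (w : seq V) : K :=
  \sum_(m <- u) (if m.2 == w then m.1 else 0).

(* generators of the two-sided ideal: the linearity relations (whose
   quotient gives the tensor algebra T(V)) and x (x) x - Q(x) 1 *)
Definition gen_add (x y : V) : fa :=
  [:: (1, [:: x + y]); (-1, [:: x]); (-1, [:: y])].
Definition gen_scale (c : K) (x : V) : fa :=
  [:: (1, [:: c *: x]); (- c, [:: x])].
Definition gen_clif (Q : V -> K) (x : V) : fa :=
  [:: (1, [:: x; x]); (- Q x, [::])].

Definition is_gen (Q : V -> K) (g : fa) : Prop :=
  (exists x y, g = gen_add x y) \/ (exists c x, g = gen_scale c x)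
  \/ (exists x, g = gen_clif Q x).

Definition in_ideal (Q : V -> K) (u : fa) : Prop :=
  exists s : seq (K * seq V * fa * seq V),
    (forall t, t \in s -> is_gen Q t.1.2) /\
    coef u =1 coef (flatten [seq fscale t.1.1.1
                      (fmul (fmul (fword t.1.1.2) t.1.2) (fword t.2)) | t <- s]).

Definition cong (Q : V -> K) (u v : fa) : Prop := in_ideal Q (u ++ fscale (-1) v).

(* equality in the exterior algebra /\(V) = Cl(V,0) *)
Definition ext_eq (u v : fa) : Prop := cong (fun _ => 0) u v.

Definition ext (x : V) (u : fa) : fa := [seq (m.1, x :: m.2) | m <- u].

Fixpoint ins_word (f : V -> K) (w : seq V) : fa :=
  match w with
  | [::] => [::]
  | y :: w' => (f y, w') :: [seq (- m.1, y :: m.2) | m <- ins_word f w']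
  end.
Definition ins (f : V -> K) (u : fa) : fa :=
  flatten [seq fscale m.1 (ins_word f m.2) | m <- u].

Definition opv (G : V -> V -> K) (x : V) (u : fa) : fa := ext x u ++ ins (G x) u.

Definition opword (G : V -> V -> K) (w : seq V) (u : fa) : fa := foldr (opv G) u w.

(* \bar\Lambda_G (a) applied to w, a representing an element of Cl(V,Q_G) *)
Definition Lam (G : V -> V -> K) (a : fa) (w : fa) : fa :=
  flatten [seq fscale m.1 (opword G m.2 w) | m <- a].

Definition lam (A : V -> V -> K) (u : fa) : fa := Lam A u (fword [::]).

End CliffordDefs.

From HB Require Import structures.
From mathcomp Require Import all_boot all_order all_algebra.
From mathcomp Require Import ring.
Set Implicit Arguments. Unset Strict Implicit. Unset Printing Implicit Defensive.
Import GRing.Theory.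
Local Open Scope ring_scope.

(* Everything is proved in the free algebra itself, up to equality of
   coefficients: no relation of the ideals is ever used, which is why the
   bilinearity of F and A and the alternation of A (needed only for rho_F,
   rho_F' and lambda_A to be defined on the quotients) do not enter.
   Interior products satisfy i_f e_x + e_x i_f = f(x) and anticommute, so
   lambda_B commutes with every i_f and turns e_x into e_x + i^B_x.  Hence
   lambda_A (e_x + i^F_x) = (e_x + i^(F+A)_x) lambda_A, and along the words of
   a this gives rho_(F+A)(a) lambda_A = lambda_A rho_F(a).  Applied to 1 with
   F := A, A := -A and a := u, it yields
   lambda_(-A) (lambda_A u) = Lambda_0(u)(1) = u. *)

Local Notation "u ≡ v" := (coef u =1 coef v) (at level 70).

Section FreeAlgebra.
Variables (K : fieldType) (V : lmodType K).
Local Notation fa := (fa V).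
Local Notation fword := (@fword K V).
Implicit Types (u v : fa) (w z : seq V) (f : V -> K) (G : V -> V -> K).

Lemma coefE u z : coef u z = \sum_(m <- u) m.1 * (m.2 == z)%:R.
Proof. by apply: eq_bigr => m _; case: eqP; rewrite ?mulr1 ?mulr0. Qed.

Lemma coef_nil z : coef [::] z = 0.
Proof. exact: big_nil. Qed.

Lemma coef_cons m u z : coef (m :: u) z = m.1 * (m.2 == z)%:R + coef u z.
Proof. by rewrite !coefE big_cons. Qed.

Lemma coef_cat u v z : coef (u ++ v) z = coef u z + coef v z.
Proof. exact: big_cat. Qed.

Lemma coef_fscale c u z : coef (fscale c u) z = c * coef u z.
Proof. by rewrite !coefE big_map mulr_sumr; apply: eq_bigr => m _; rewrite mulrA. Qed.

Lemma coef_fword w z : coef (fword w) z = (w == z)%:R.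
Proof. by rewrite coef_cons coef_nil mul1r addr0. Qed.

Lemma coef_ext x u z : coef (ext x u) z = \sum_(m <- u) m.1 * ((x :: m.2) == z)%:R.
Proof. by rewrite coefE big_map. Qed.

Lemma ext_cat x u v : ext x (u ++ v) = ext x u ++ ext x v.
Proof. exact: map_cat. Qed.

Lemma sum_coef_eq (g : seq V -> K) u v : u ≡ v ->
  \sum_(m <- u) m.1 * g m.2 = \sum_(m <- v) m.1 * g m.2.
Proof.
move=> uv; set S := undup [seq m.2 | m <- u ++ v].
have regroup t : {subset t <= u ++ v} ->
    \sum_(m <- t) m.1 * g m.2 = \sum_(w <- S) coef t w * g w.
  move=> tuv; under [RHS]eq_bigr => w _ do rewrite coefE big_distrl.
  rewrite exchange_big; apply: eq_big_seq => m mt /=.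
  rewrite (bigD1_seq m.2) ?undup_uniq ?mem_undup ?map_f ?tuv //= eqxx mulr1.
  by rewrite big1 ?addr0 // => w /negbTE; rewrite eq_sym => ->; rewrite mulr0 mul0r.
rewrite !regroup; first by apply: eq_bigr => w _; rewrite uv.
all: by move=> m; rewrite mem_cat => ->; rewrite ?orbT.
Qed.

Definition linext (h : seq V -> fa) u : fa := flatten [seq fscale m.1 (h m.2) | m <- u].

Lemma big_linext (g : seq V -> K) h u :
  \sum_(n <- linext h u) n.1 * g n.2 = \sum_(m <- u) m.1 * \sum_(n <- h m.2) n.1 * g n.2.
Proof.
elim: u => [|m u IH]; first by rewrite !big_nil.
rewrite /linext /= big_cat -/(linext h u) IH big_cons big_map mulr_sumr.
by congr (_ + _); apply: eq_bigr => n _; rewrite mulrA.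
Qed.

Lemma coef_linext h u z : coef (linext h u) z = \sum_(m <- u) m.1 * coef (h m.2) z.
Proof. by rewrite coefE (big_linext (fun w => (w == z)%:R)); under eq_bigr do rewrite -coefE. Qed.

Lemma eq_linext h g u : (forall w, h w ≡ g w) -> linext h u ≡ linext g u.
Proof. by move=> hg z; rewrite !coef_linext; apply: eq_bigr => m _; rewrite hg. Qed.

Lemma linext_coef_eq h u v : u ≡ v -> linext h u ≡ linext h v.
Proof. by move=> uv z; rewrite !coef_linext (sum_coef_eq (fun w => coef (h w) z) uv). Qed.

Lemma linext_fword h w : linext h (fword w) ≡ h w.
Proof. by move=> z; rewrite coef_linext big_seq1 mul1r. Qed.

Lemma linext_fscale h c u : linext h (fscale c u) ≡ fscale c (linext h u).
Proof.
move=> z; rewrite coef_fscale !coef_linext big_map mulr_sumr.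
by apply: eq_bigr => m _; rewrite mulrA.
Qed.

Lemma linext_cat h u v : linext h (u ++ v) = linext h u ++ linext h v.
Proof. by rewrite /linext map_cat flatten_cat. Qed.

Lemma linext_ext h x u : linext h (ext x u) = linext (fun w => h (x :: w)) u.
Proof. by rewrite /linext /ext -map_comp. Qed.

Lemma linext_linext h g u : linext h (linext g u) ≡ linext (fun w => linext h (g w)) u.
Proof.
move=> z; rewrite coef_linext (big_linext (fun w => coef (h w) z)) coef_linext.
by apply: eq_bigr => m _; rewrite /= coef_linext.
Qed.

Definition linear_op (T : fa -> fa) := forall u, T u ≡ linext (fun w => T (fword w)) u.

Section LinearOp.
Variables T S : fa -> fa.
Hypotheses (lT : linear_op T) (lS : linear_op S).

Lemma linear_op_coef_eq u v : u ≡ v -> T u ≡ T v.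
Proof. by move=> uv; apply: ftrans (lT u) _; apply: ftrans (linext_coef_eq _ uv) (fsym (lT v)). Qed.

Lemma linear_opD u v z : coef (T (u ++ v)) z = coef (T u) z + coef (T v) z.
Proof. by rewrite lT linext_cat coef_cat -!lT. Qed.

Lemma linear_opZ c u z : coef (T (fscale c u)) z = c * coef (T u) z.
Proof. by rewrite lT linext_fscale coef_fscale -lT. Qed.

Lemma linear_op_linext h u : T (linext h u) ≡ linext (fun w => T (h w)) u.
Proof.
apply: ftrans (lT _) _; apply: ftrans (linext_linext _ _ _) _.
by apply: eq_linext => w; apply: fsym (lT _).
Qed.

Lemma eq_linear_op u : (forall w, T (fword w) ≡ S (fword w)) -> T u ≡ S u.
Proof. by move=> TS; apply: ftrans (lT u) _; apply: ftrans _ (fsym (lS u)); apply: eq_linext. Qed.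

Lemma linear_comp : linear_op (fun u => T (S u)).
Proof. by move=> u; apply: ftrans (linear_op_coef_eq (lS u)) _; apply: linear_op_linext. Qed.

Lemma linear_catop : linear_op (fun u => T u ++ S u).
Proof.
move=> u z; rewrite coef_cat lT lS !coef_linext -big_split.
by apply: eq_bigr => m _; rewrite /= coef_cat mulrDr.
Qed.

End LinearOp.

Lemma linear_id : linear_op id.
Proof. by move=> u z; rewrite coef_linext coefE; apply: eq_bigr => m _; rewrite coef_fword. Qed.

Lemma linear_linext h : linear_op (linext h).
Proof. by move=> u; apply: eq_linext => w; apply: fsym; apply: linext_fword. Qed.

Lemma linear_fscale c : linear_op (fscale c).
Proof.
move=> u z; rewrite coef_fscale coef_linext coefE mulr_sumr.
by apply: eq_bigr => m _; rewrite coef_fscale coef_fword mulrCA.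
Qed.

Lemma linear_nil : linear_op (fun _ => [::]).
Proof. by move=> u z /=; rewrite coef_nil coef_linext big1 // => m _; rewrite coef_nil mulr0. Qed.

Lemma linear_ext x : linear_op (ext x).
Proof. by move=> u z; rewrite coef_ext coef_linext; apply: eq_bigr => m _; rewrite coef_fword. Qed.

Lemma insE f u : ins f u = linext (ins_word f) u.
Proof. by []. Qed.

Lemma LamE G a u : Lam G a u = linext (fun w => opword G w u) a.
Proof. by []. Qed.

Lemma lamE B u : lam B u = linext (fun w => opword B w (fword [::])) u.
Proof. by []. Qed.

Lemma linear_ins f : linear_op (ins f).
Proof. exact: linear_linext. Qed.

Lemma linear_lam B : linear_op (lam B).
Proof. exact: linear_linext. Qed.

Lemma linear_opv G x : linear_op (opv G x).
Proof. exact: linear_catop (linear_ext x) (linear_ins (G x)). Qed.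

Lemma linear_opword G w : linear_op (opword G w).
Proof. by elim: w => [|x w IH]; [apply: linear_id | apply: linear_comp (linear_opv G x) IH]. Qed.

Lemma linear_Lam G a : linear_op (Lam G a).
Proof.
elim: a => [|m a IH]; first exact: linear_nil.
exact: linear_catop (linear_comp (linear_fscale m.1) (linear_opword G m.2)) IH.
Qed.

Lemma coef_ins_word_cons f y w z :
  coef (ins_word f (y :: w)) z = f y * (w == z)%:R - coef (ext y (ins_word f w)) z.
Proof.
rewrite [ins_word _ _]/= coef_cons coef_ext coefE big_map -sumrN.
by congr (_ + _); apply: eq_bigr => m _; rewrite mulNr.
Qed.

Lemma ins_ext f x u z :
  coef (ins f (ext x u)) z = f x * coef u z - coef (ext x (ins f u)) z.
Proof.
rewrite !insE linext_ext (linear_op_linext (linear_ext x)) (linear_id u z).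
rewrite !coef_linext mulr_sumr -sumrB; apply: eq_bigr => m _.
by rewrite coef_ins_word_cons coef_fword; ring.
Qed.

Lemma ins_ext_coef_eq f x u :
  ins f (ext x u) ≡ fscale (f x) u ++ fscale (-1) (ext x (ins f u)).
Proof. by move=> z; rewrite ins_ext coef_cat !coef_fscale mulN1r. Qed.

Lemma ins_anticomm f g u z : coef (ins f (ins g u)) z = - coef (ins g (ins f u)) z.
Proof.
rewrite -mulN1r -coef_fscale; move: z.
apply: (eq_linear_op (linear_comp (linear_ins f) (linear_ins g))
          (linear_comp (linear_fscale _) (linear_comp (linear_ins g) (linear_ins f)))).
elim=> [|x w IH] z //; rewrite -[fword _]/(ext x (fword w)) coef_fscale.
rewrite !(linear_op_coef_eq (linear_ins _) (ins_ext_coef_eq _ x _) z).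
rewrite !(linear_opD (linear_ins _)) !(linear_opZ (linear_ins _)) !ins_ext.
rewrite (linear_op_coef_eq (linear_ext x) IH z) (linear_opZ (linear_ext x)).
ring.
Qed.

Lemma ins_opv f G x u z :
  coef (ins f (opv G x u)) z = f x * coef u z - coef (opv G x (ins f u)) z.
Proof. by rewrite (linear_opD (linear_ins f)) ins_ext ins_anticomm !coef_cat; ring. Qed.

Lemma lam_ext B x u : lam B (ext x u) ≡ opv B x (lam B u).
Proof. by rewrite !lamE linext_ext; apply: fsym (linear_op_linext (linear_opv B x) _ _). Qed.

Lemma lam_ins B f u : lam B (ins f u) ≡ ins f (lam B u).
Proof.
apply: (eq_linear_op (linear_comp (linear_lam B) (linear_ins f))
          (linear_comp (linear_ins f) (linear_lam B))).
elim=> [|x w IH] z //; rewrite -[fword _]/(ext x (fword w)).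
rewrite (linear_op_coef_eq (linear_lam B) (ins_ext_coef_eq f x _) z).
rewrite (linear_opD (linear_lam B)) !(linear_opZ (linear_lam B)) (lam_ext B x _ z).
rewrite (linear_op_coef_eq (linear_opv B x) IH z).
by rewrite (linear_op_coef_eq (linear_ins f) (lam_ext B x _) z) ins_opv; ring.
Qed.

Lemma ins_wordD h f g w : (forall y, h y = f y + g y) ->
  ins_word h w ≡ ins_word f w ++ ins_word g w.
Proof.
move=> hfg; elim: w => [|y w IH] z //; rewrite coef_cat !coef_ins_word_cons hfg.
by rewrite (linear_op_coef_eq (linear_ext y) IH z) ext_cat coef_cat; ring.
Qed.

Lemma insD h f g u z : (forall y, h y = f y + g y) ->
  coef (ins h u) z = coef (ins f u) z + coef (ins g u) z.
Proof.
move=> hfg; rewrite !insE !coef_linext -big_split; apply: eq_bigr => m _.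
by rewrite (ins_wordD _ hfg) coef_cat mulrDr.
Qed.

Lemma ins0 f u z : (forall y, f y = 0) -> coef (ins f u) z = 0.
Proof.
move=> f0; have ff : coef (ins f u) z = coef (ins f u) z + coef (ins f u) z.
  by apply: insD => y; rewrite f0 addr0.
by apply: (@addrI _ (coef (ins f u) z)); rewrite addr0 -ff.
Qed.

Lemma opword0 w : opword (fun _ _ => 0) w (fword [::]) ≡ fword w.
Proof.
elim: w => [|x w IH] z //; rewrite [opword _ _ _]/= coef_cat ins0 // addr0.
exact: (linear_op_coef_eq (linear_ext x) IH z).
Qed.

Lemma Lam0_unit u : Lam (fun _ _ => 0) u (fword [::]) ≡ u.
Proof. by rewrite LamE; apply: ftrans (eq_linext _ opword0) (fsym (linear_id u)). Qed.

Lemma lam_unit B : lam B (fword [::]) ≡ fword [::].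
Proof. by rewrite lamE; apply: linext_fword. Qed.

Lemma opword_lam G F A w u : (forall x y, G x y = F x y + A x y) ->
  opword G w (lam A u) ≡ lam A (opword F w u).
Proof.
move=> GFA; elim: w => [|x w IH] z //=; set v := opword F w u.
rewrite (linear_op_coef_eq (linear_opv G x) IH z) (linear_opD (linear_lam A)).
by rewrite (lam_ext A x v z) (lam_ins A (F x) v z) !coef_cat (insD _ _ (GFA x)); ring.
Qed.

Lemma Lam_lam G F A a u : (forall x y, G x y = F x y + A x y) ->
  Lam G a (lam A u) ≡ lam A (Lam F a u).
Proof.
move=> GFA; rewrite !LamE; apply: ftrans (eq_linext _ (fun w => opword_lam w u GFA)) _.
exact: fsym (linear_op_linext (linear_lam A) _ _).
Qed.

Lemma lamK A B u : (forall x y, A x y + B x y = 0) -> lam B (lam A u) ≡ u.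
Proof.
move=> AB0; have := Lam_lam u (fword [::]) (fun x y => esym (AB0 x y)).
move=> /fsym /ftrans; apply.
exact: ftrans (linear_op_coef_eq (linear_Lam _ u) (lam_unit B)) (Lam0_unit u).
Qed.

Lemma coef_eq_cong Q u v : u ≡ v -> cong Q u v.
Proof. by move=> uv; exists [::]; split=> // z /=; rewrite coef_nil coef_cat coef_fscale uv mulN1r subrr. Qed.

End FreeAlgebra.

Unset Implicit Arguments.

Theorem mainTheorem13 (K : fieldType) (V : lmodType K) (F A : V -> V -> K)
  (HFl : forall (c : K) (x y z : V), F (c *: x + y) z = c * F x z + F y z)
  (HFr : forall (c : K) (x y z : V), F z (c *: x + y) = c * F z x + F z y)
  (HAl : forall (c : K) (x y z : V), A (c *: x + y) z = c * A x z + A y z)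
  (HAr : forall (c : K) (x y z : V), A z (c *: x + y) = c * A z x + A z y)
  (HAalt : forall x : V, A x x = 0) :
  let F' := fun x y => F x y + A x y in
  let mA := fun x y => - A x y in
  (* \bar\lambda_{-A} is the inverse of \bar\lambda_A on /\(V) *)
  (forall w : fa V, ext_eq (lam mA (lam A w)) w) /\
  (forall w : fa V, ext_eq (lam A (lam mA w)) w) /\
  (* rho_{F'}(a) = \bar\lambda_A o rho_F(a) o \bar\lambda_A^{-1} *)
  (forall (a : fa V) (w : fa V),
      ext_eq (Lam F' a w) (lam A (Lam F a (lam mA w)))).
Proof.
move=> F' mA.
have lamK_mA (w : fa V) : lam A (lam mA w) ≡ w by apply: lamK => x y; apply: addNr.
split; [|split] => [w|w|a w]; apply: coef_eq_cong.
- by apply: lamK => x y; apply: subrr.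
- exact: lamK_mA.
apply: ftrans (linear_op_coef_eq (linear_Lam F' a) (fsym (lamK_mA w))) _.
exact: Lam_lam.
Qed.
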